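(* Let $\mathcal{M}$ be a matroid on $[n]$, $J=J(\mathcal{M})$, and let $N$ be a monomial. (1) If $N\notin J$, then $SF_\ell(J:N)=SF_\ell(J):N$ for all $\ell\ge1$. (2) If $N\in G(J)$, then for every $v$ with $x_v\mid N$ and every $\ell>1$, $$SF_\ell(J):N=SF_{\ell-1}\big(J(\mathcal{M}/v):N\big).$$
   Context: $R=\mathbb{K}[x_1,\ldots,x_n]$, $\mathbb{K}$ a field; $\mathfrak p_F=(x_i:i\in F)$. The cover ideal of a matroid $\mathcal{N}$ on $E\subseteq[n]$ is $J(\mathcal{N})=\bigcap_{F\in\mathcal{B}(\mathcal{N})}\mathfrak p_F$, formed in $\mathbb{K}[x_i:i\in E]$ and extended to $R$. $\mathcal{M}/v$ is the contraction of $\mathcal{M}$ by $\{v\}$ (a matroid on $[n]-\{v\}$). For a squarefree monomial ideal $I$ with minimal primes $\mathfrak q_j$, $I^{(\ell)}=\bigcap_j\mathfrak q_j^\ell$ and $SF_\ell(I)$ is the ideal generated by the squarefree monomials in $I^{(\ell)}$ ($SF_\ell(I)=0$ if there are none). $G(\cdot)$ denotes minimal monomial generators. *)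

(* Monomials of R = K[x_1..x_n] are exponent vectors on 'I_n
   (variable x_i <-> index i : 'I_n). Every ideal occurring in the statement is a
   monomial ideal, and is represented by the (upward closed) set of monomials it
   contains; two monomial ideals are equal iff they contain the same monomials. *)
From mathcomp Require Import all_boot.
Set Implicit Arguments. Unset Strict Implicit. Unset Printing Implicit Defensive.

Definition mon (n : nat) := {ffun 'I_n -> nat}.
Definition mmul n (a b : mon n) : mon n := [ffun i => a i + b i].
Definition mdiv n (a b : mon n) : Prop := forall i, a i <= b i.
Definition sqfree n (a : mon n) : Prop := forall i, a i <= 1.

Definition mideal (n : nat) := mon n -> Prop.
Definition ideal_eq n (I1 I2 : mideal n) : Prop := forall m, I1 m <-> I2 m.

(* monomial prime p_F = (x_i : i in F): contains x^a iff some i in F has a_i > 0 *)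
Definition in_pF n (F : {set 'I_n}) (m : mon n) : bool := [exists i in F, 0 < m i].
(* p_F^l contains x^a iff sum_{i in F} a_i >= l *)
Definition in_pF_pow n (F : {set 'I_n}) (l : nat) (m : mon n) : bool :=
  l <= \sum_(i in F) m i.

Definition is_matroid n (E : {set 'I_n}) (B : {set {set 'I_n}}) : Prop :=
  [/\ B != set0,
      (forall F, F \in B -> F \subset E) &
      (forall B1 B2, B1 \in B -> B2 \in B -> forall x, x \in B1 :\: B2 ->
         exists2 y, y \in B2 :\: B1 & (y |: (B1 :\ x)) \in B)].

Definition mrank n (B : {set {set 'I_n}}) (T : {set 'I_n}) : nat :=
  \max_(F in B) #|F :&: T|.

(* contraction M/T : bases are B - T with B in B(M) and B :&: T a basis of M|T *)
Definition contract n (B : {set {set 'I_n}}) (T : {set 'I_n}) : {set {set 'I_n}} :=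
  [set F :\: T | F in [set F in B | #|F :&: T| == mrank B T]].

Definition coverJ n (B : {set {set 'I_n}}) : mideal n :=
  fun m => forall F, F \in B -> in_pF F m.

Definition colon n (I : mideal n) (N : mon n) : mideal n := fun m => I (mmul m N).

Definition minprime n (I : mideal n) (F : {set 'I_n}) : Prop :=
  (forall m, I m -> in_pF F m) /\
  (forall G : {set 'I_n}, G \proper F -> ~ (forall m, I m -> in_pF G m)).

Definition symb n (I : mideal n) (l : nat) : mideal n :=
  fun m => forall F, minprime I F -> in_pF_pow F l m.

Definition SF n (I : mideal n) (l : nat) : mideal n :=
  fun m => exists s : mon n, [/\ sqfree s, symb I l s & mdiv s m].

Definition mingen n (I : mideal n) (N : mon n) : Prop :=
  I N /\ (forall M : mon n, mdiv M N -> M <> N -> ~ I M).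

(* The exchange axiom lets any basis H be moved toward a fixed basis G, one
   element of (H ∩ supp N) \ G at a time, without increasing the weight of a
   0/1 vector that equals 1 on supp N.  Applied to the squarefree witness
   rad(sN), this reduces the bound defining SF_l(J) : N to the bases H with
   H ∩ supp N ⊆ G.  In (1), G avoids supp N, and these bases are exactly the
   minimal primes of J : N.  In (2), minimality of N yields a basis G with
   G ∩ supp N = {v}; those bases are then v + F' with F' a basis of M/v
   avoiding supp N, whence the shift from l to l - 1.  The reverse inclusions
   just restrict a witness of SF_l(J) off supp N. *)

From mathcomp Require Import all_boot.
Set Implicit Arguments. Unset Strict Implicit. Unset Printing Implicit Defensive.

Section Monomials.
Variable n : nat.
Implicit Types (a b c s m N : mon n) (A F G : {set 'I_n}).

Definition msupp a : {set 'I_n} := [set i | 0 < a i].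
Definition mind A : mon n := [ffun i => nat_of_bool (i \in A)].
Definition mrad a : mon n := mind (msupp a).
Definition mrestr A a : mon n := [ffun i => if i \in A then a i else 0].

Lemma msupp_mind A : msupp (mind A) = A.
Proof. by apply/setP => i; rewrite !inE ffunE; case: (i \in A). Qed.

Lemma msupp_mmul a b : msupp (mmul a b) = msupp a :|: msupp b.
Proof. by apply/setP => i; rewrite !inE ffunE addn_gt0. Qed.

Lemma msupp_mrestr A a : msupp (mrestr A a) = A :&: msupp a.
Proof. by apply/setP => i; rewrite !inE ffunE; case: (i \in A). Qed.

Lemma msuppS a b : mdiv a b -> msupp a \subset msupp b.
Proof. by move=> ab; apply/subsetP => i; rewrite !inE => /leq_trans; apply. Qed.

Lemma in_pF_msupp F a : in_pF F a = ~~ [disjoint F & msupp a].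
Proof.
rewrite disjoints_subset; apply/existsP/subsetPn => [[i /andP[iF ai]]|[i iF]].
  by exists i; rewrite // !inE negbK.
by rewrite !inE negbK => ai; exists i; rewrite iF.
Qed.

Lemma in_pF_mind_setC F G : in_pF F (mind (~: G)) = ~~ (F \subset G).
Proof. by rewrite in_pF_msupp msupp_mind disjoints_subset setCK. Qed.

Lemma mdiv_trans a b c : mdiv a b -> mdiv b c -> mdiv a c.
Proof. by move=> ab bc i; exact: leq_trans (ab i) (bc i). Qed.

Lemma mdiv_mmulr a b : mdiv a (mmul a b).
Proof. by move=> i; rewrite ffunE leq_addr. Qed.

Lemma mdiv_mmul2r a b c : mdiv a b -> mdiv (mmul a c) (mmul b c).
Proof. by move=> ab i; rewrite !ffunE leq_add2r. Qed.

Lemma sqfree_mdiv a b : sqfree b -> mdiv a b -> sqfree a.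
Proof. by move=> sqb ab i; exact: leq_trans (ab i) (sqb i). Qed.

Lemma sqfree_mind A : sqfree (mind A).
Proof. by move=> i; rewrite ffunE; case: (i \in A). Qed.

Lemma mind_mdiv (A B : {set 'I_n}) : A \subset B -> mdiv (mind A) (mind B).
Proof. by move=> /subsetP AB i; rewrite !ffunE; case: (boolP (i \in A)) => // /AB ->. Qed.

Lemma mrad_mdiv a : mdiv (mrad a) a.
Proof. by move=> i; rewrite ffunE inE; case: (posnP (a i)) => [->|]. Qed.

Lemma mdiv_mrad s a : sqfree s -> mdiv s a -> mdiv s (mrad a).
Proof.
move=> sqs sa i; rewrite ffunE inE.
by case: (posnP (s i)) => [->//|/leq_trans/(_ (sa i)) ->]; exact: sqs.
Qed.

Lemma mradS a b : mdiv a b -> mdiv (mrad a) (mrad b).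
Proof. by move=> /msuppS; exact: mind_mdiv. Qed.

Lemma mrad_mmul_colon s m N : mdiv s m -> mdiv (mrad (mmul s N)) (mmul m N).
Proof. by move=> sm; apply: mdiv_trans (mrad_mdiv _); apply/mradS/mdiv_mmul2r. Qed.

Lemma mrestr_mdiv A a : mdiv (mrestr A a) a.
Proof. by move=> i; rewrite ffunE; case: (i \in A). Qed.

Lemma mrestr_colon s m N : mdiv s (mmul m N) -> mdiv (mrestr (~: msupp N) s) m.
Proof.
move=> smN i; rewrite ffunE !inE -leqNgt leqn0.
by case: eqP (smN i) => // Ni; rewrite ffunE Ni addn0.
Qed.

Lemma sum_mrestr A a F : F \subset A -> \sum_(i in F) mrestr A a i = \sum_(i in F) a i.
Proof. by move=> /subsetP FA; apply: eq_bigr => i /FA iA; rewrite ffunE iA. Qed.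

End Monomials.

Section CoverIdeals.
Variable n : nat.
Implicit Types (C : {set {set 'I_n}}) (F G : {set 'I_n}) (a b m N s : mon n) (I : mideal n).

Definition clutter C := {in C &, forall F1 F2, F1 \subset F2 -> F1 = F2}.

Lemma clutter_subset C C' : C' \subset C -> clutter C -> clutter C'.
Proof. by move=> /subsetP sC clC F1 F2 /sC F1C /sC F2C; exact: clC. Qed.

Lemma in_pF_mmul F a b : in_pF F (mmul a b) = in_pF F a || in_pF F b.
Proof.
apply/exists_inP/orP => [[i iF]|[]/exists_inP[i iF pos]]; last 2 first.
- by exists i; rewrite // ffunE addn_gt0 pos.
- by exists i; rewrite // ffunE addn_gt0 pos orbT.
by rewrite ffunE addn_gt0 => /orP[] pos; [left|right]; apply/exists_inP; exists i.
Qed.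

Lemma coverJPn C m : ~ coverJ C m -> exists2 F, F \in C & [disjoint F & msupp m].
Proof.
move=> nJm; have [/exists_inP[F FC]|/exists_inPn inC] := boolP [exists F in C, ~~ in_pF F m].
  by rewrite in_pF_msupp negbK; exists F.
by case: nJm => F FC; move: (inC F FC); rewrite negbK.
Qed.

Lemma minprime_coverJ C G : clutter C -> minprime (coverJ C) G <-> G \in C.
Proof.
move=> clC; split=> [[JG minG]|GC].
  have [F FC FG] : exists2 F, F \in C & F \subset G.
    have [/exists_inP//|/exists_inPn noF] := boolP [exists F in C, F \subset G].
    suff: in_pF G (mind (~: G)) by rewrite in_pF_mind_setC subxx.
    by apply: JG => F FC; rewrite in_pF_mind_setC noF.
  have [<-//|neFG] := eqVneq F G.
  by case: (minG F) => [|m]; [rewrite properEneq neFG | apply].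
split=> [m|G' ltG' JG']; first exact.
suff: in_pF G' (mind (~: G')) by rewrite in_pF_mind_setC subxx.
apply: JG' => F FC; rewrite in_pF_mind_setC; apply/negP => FG'.
have eqFG := clC F G FC GC (subset_trans FG' (proper_sub ltG')).
by move: ltG'; rewrite properE -eqFG FG' andbF.
Qed.

Lemma minprime_ideal_eq I1 I2 F : ideal_eq I1 I2 -> minprime I1 F <-> minprime I2 F.
Proof.
move=> eqI; have sub G : (forall m, I1 m -> in_pF G m) <-> (forall m, I2 m -> in_pF G m).
  by split=> h m /eqI; apply: h.
by split=> -[h1 h2]; split=> [|G /h2 nh /sub //]; apply/sub.
Qed.

Lemma symb_coverJ C l s :
  clutter C -> symb (coverJ C) l s <-> {in C, forall F, l <= \sum_(i in F) s i}.
Proof.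
move=> clC; split=> h F => [FC | /(minprime_coverJ F clC) FC]; apply: h => //.
exact/minprime_coverJ.
Qed.

Lemma colon_coverJ C N :
  ideal_eq (colon (coverJ C) N) (coverJ [set F in C | [disjoint F & msupp N]]).
Proof.
move=> m; split=> Jm F.
  rewrite inE => /andP[FC FN]; move: (Jm F FC).
  by rewrite in_pF_mmul (in_pF_msupp F N) FN orbF.
move=> FC; rewrite in_pF_mmul (in_pF_msupp F N).
have [FN|] := boolP [disjoint F & msupp N]; rewrite ?orbT // orbF.
by apply: Jm; rewrite inE FC.
Qed.

Lemma symb_colon_coverJ C N l s : clutter C ->
  symb (colon (coverJ C) N) l s <->
  {in C, forall F, [disjoint F & msupp N] -> l <= \sum_(i in F) s i}.
Proof.
move=> clC; have clCN : clutter [set F in C | [disjoint F & msupp N]].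
  by apply: clutter_subset clC; apply/subsetP => F; rewrite inE => /andP[].
have minCN F := iff_trans (minprime_ideal_eq F (colon_coverJ C N)) (minprime_coverJ F clCN).
split=> h F.
  by move=> FC FN; apply/h/minCN; rewrite inE FC.
by move/minCN; rewrite inE => /andP[FC FN]; exact: h.
Qed.

Lemma card_setI1 F (v : 'I_n) : #|F :&: [set v]| = nat_of_bool (v \in F).
Proof.
have [vF|vF] := boolP (v \in F); first by rewrite (setIidPr _) ?sub1set ?cards1.
by rewrite disjoint_setI0 ?cards0 // disjoint_sym disjoints1.
Qed.

Lemma mem_contract1 C (v : 'I_n) F : v \in cover C ->
  (F \in contract C [set v]) = (v \notin F) && (v |: F \in C).
Proof.
case/bigcupP=> G GC vG; have rk1 : mrank C [set v] = 1.
  apply/anti_leq/andP; split.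
    by apply/bigmax_leqP => F' _; rewrite card_setI1 leq_b1.
  by apply: leq_trans (leq_bigmax_cond _ GC); rewrite card_setI1 vG.
apply/imsetP/andP => [[F']|[vF vFC]].
  rewrite inE rk1 card_setI1 => /andP[F'C]; case vF': (v \in F') => // _ ->.
  by rewrite setD1K // !inE eqxx.
by exists (v |: F); rewrite ?setU1K // inE vFC card_setI1 setU11 rk1.
Qed.

Lemma clutter_contract1 C (v : 'I_n) :
  v \in cover C -> clutter C -> clutter (contract C [set v]).
Proof.
move=> vC clC F1 F2; rewrite !mem_contract1 // => /andP[vF1 F1C] /andP[vF2 F2C] F12.
by rewrite -(setU1K vF1) -(setU1K vF2) (clC _ _ F1C F2C) ?setUS.
Qed.

Lemma coverJ_setI_sub1 C N F (v : 'I_n) : coverJ C N -> F \in C ->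
  F :&: msupp N \subset [set v] -> F :&: msupp N = [set v].
Proof.
move=> JN FC; rewrite subset1 => /orP[/eqP//|]; rewrite setI_eq0 => FN.
by have := JN F FC; rewrite in_pF_msupp FN.
Qed.

Lemma mingen_coverJ_basis C N (v : 'I_n) : mingen (coverJ C) N -> 0 < N v ->
  exists2 G, G \in C & G :&: msupp N = [set v].
Proof.
case=> JN minN Nv; have /coverJPn[G GC GM] : ~ coverJ C (mrestr [set~ v] N).
  apply: minN; first exact: mrestr_mdiv.
  by move/(congr1 (fun a => a v)); rewrite ffunE !inE eqxx => Nv0; rewrite -Nv0 in Nv.
exists G => //; apply: (coverJ_setI_sub1 JN GC); apply/subsetP => i /setIP[iG iN].
apply: contraT; rewrite in_set1 => iv.
by have := disjointFr GM iG; rewrite msupp_mrestr in_setI iN in_setC1 iv.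
Qed.

Lemma colon_SF_sub_SF_colon C N l m : clutter C ->
  colon (SF (coverJ C) l) N m -> SF (colon (coverJ C) N) l m.
Proof.
move=> clC [s [sqs /(symb_coverJ _ _ clC) Js smN]]; exists (mrestr (~: msupp N) s); split.
- exact: sqfree_mdiv sqs (mrestr_mdiv _ _).
- apply/(symb_colon_coverJ _ _ _ clC) => F FC FN.
  by rewrite sum_mrestr -?disjoints_subset //; exact: Js.
- exact: mrestr_colon.
Qed.

Lemma colon_SF_sub_SF_contract1 C N (v : 'I_n) l m :
  v \in cover C -> clutter C ->
  colon (SF (coverJ C) l) N m -> SF (colon (coverJ (contract C [set v])) N) (l - 1) m.
Proof.
move=> vC clC [s [sqs /(symb_coverJ _ _ clC) Js smN]]; exists (mrestr (~: msupp N) s); split.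
- exact: sqfree_mdiv sqs (mrestr_mdiv _ _).
- apply/(symb_colon_coverJ _ _ _ (clutter_contract1 vC clC)) => F.
  rewrite mem_contract1 // => /andP[vF vFC] FN.
  rewrite sum_mrestr -?disjoints_subset // leq_subLR.
  by apply: leq_trans (Js _ vFC) _; rewrite big_setU1 //= leq_add2r.
- exact: mrestr_colon.
Qed.

End CoverIdeals.

Section Matroid.
Variables (n : nat) (E : {set 'I_n}) (B : {set {set 'I_n}}).
Hypothesis matB : is_matroid E B.

Lemma matroid_clutter : clutter B.
Proof.
case: matB => _ _ exB F1 F2 F1B F2B F12; apply/eqP; rewrite eqEsubset F12.
apply/subsetP => x xF2; apply: contraT => xF1.
have xF21 : x \in F2 :\: F1 by rewrite inE xF1 xF2.
have [y /setDP[yF1 yF2] _] := exB F2 F1 F2B F1B x xF21.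
by rewrite (subsetP F12 y yF1) in yF2.
Qed.

Lemma basis_exchange_toward (S G H : {set 'I_n}) (t : 'I_n -> nat) :
  G \in B -> H \in B -> (forall x y, x \in S -> t y <= t x) ->
  exists2 H', H' \in B & (H' :&: S \subset G) && (\sum_(i in H') t i <= \sum_(i in H) t i).
Proof.
case: matB => _ _ exB GB + tS.
elim: {H}_.+1 {-2}H (ltnSn #|H :\: G|) => // k IH H ltHk HB.
have [HSG|/subsetPn[x /setIP[xH xS] xG]] := boolP (H :&: S \subset G).
  by exists H; rewrite ?HSG /=.
have xHG : x \in H :\: G by rewrite inE xG xH.
have [y /setDP[yG yH] H1B] := exB H G HB GB x xHG.
have ltH1 : #|(y |: (H :\ x)) :\: G| < #|H :\: G|.
  rewrite (_ : _ :\: G = (H :\: G) :\ x); first exact/proper_card/properD1.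
  apply/setP => z; rewrite !inE.
  by case: (eqVneq z y) => [->|_]; rewrite ?yG ?andbF //= andbCA.
have [H' H'B /andP[H'SG leH']] := IH _ (leq_trans ltH1 ltHk) H1B.
exists H' => //; rewrite H'SG (leq_trans leH') //.
rewrite big_setU1 ?(big_setD1 x xH) /= ?leq_add2r ?tS //.
by rewrite !inE (negbTE yH) andbF.
Qed.

Lemma colon_SF_mrad G N l s m : G \in B -> mdiv s m ->
  {in B, forall H, H :&: msupp N \subset G -> l <= \sum_(i in H) mrad (mmul s N) i} ->
  colon (SF (coverJ B) l) N m.
Proof.
move=> GB sm lbH; exists (mrad (mmul s N)).
split; [exact: sqfree_mind | | exact: mrad_mmul_colon].
apply/(symb_coverJ _ _ matroid_clutter) => H HB.
have tS x y : x \in msupp N -> mrad (mmul s N) y <= mrad (mmul s N) x.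
  by move=> xN; rewrite [X in _ <= X]ffunE msupp_mmul in_setU xN orbT; exact: sqfree_mind.
have [H' H'B /andP[H'SG leH']] := basis_exchange_toward GB HB tS.
exact: leq_trans (lbH H' H'B H'SG) leH'.
Qed.

Lemma SF_colon_sub_colon_SF N l m :
  ~ coverJ B N -> SF (colon (coverJ B) N) l m -> colon (SF (coverJ B) l) N m.
Proof.
move=> /coverJPn[G GB GN] [s [sqs /(symb_colon_coverJ _ _ _ matroid_clutter) Js sm]].
apply: (colon_SF_mrad GB sm) => H HB HSG.
have HN : [disjoint H & msupp N].
  by rewrite -setI_eq0 -subset0 -(disjoint_setI0 GN) subsetI HSG subsetIr.
apply: (leq_trans (Js H HB HN)); apply: leq_sum => i _.
exact: mdiv_mrad sqs (mdiv_mmulr s N) i.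
Qed.

Lemma SF_contract1_sub_colon_SF N G (v : 'I_n) l m :
  coverJ B N -> G \in B -> G :&: msupp N = [set v] ->
  SF (colon (coverJ (contract B [set v])) N) (l - 1) m -> colon (SF (coverJ B) l) N m.
Proof.
move=> JN GB GN; have /setIP[vG _] : v \in G :&: msupp N by rewrite GN set11.
have vB : v \in cover B by apply/bigcupP; exists G.
case=> s [sqs /(symb_colon_coverJ _ _ _ (clutter_contract1 vB matroid_clutter)) Js sm].
apply: (colon_SF_mrad GB sm) => H HB HSG.
have HN : H :&: msupp N = [set v].
  by apply: coverJ_setI_sub1 JN HB _; rewrite -GN subsetI HSG subsetIr.
have /setIP[vH vN] : v \in H :&: msupp N by rewrite HN set11.
have HvN : [disjoint H :\ v & msupp N] by rewrite -setI_eq0 setIDAC HN setDv.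
have HvC : H :\ v \in contract B [set v].
  by rewrite mem_contract1 ?setD1K ?inE ?eqxx //; apply/bigcupP; exists H.
rewrite (big_setD1 v vH) /= {1}/mrad ffunE msupp_mmul in_setU vN orbT -leq_subLR.
apply: (leq_trans (Js _ HvC HvN)); apply: leq_sum => i _.
exact: mdiv_mrad sqs (mdiv_mmulr s N) i.
Qed.

End Matroid.

Theorem proposition3p13 (n : nat) (B : {set {set 'I_n}}) (N : mon n) :
  is_matroid setT B ->
  (~ coverJ B N ->
     forall l, 1 <= l ->
       ideal_eq (SF (colon (coverJ B) N) l) (colon (SF (coverJ B) l) N)) /\
  (mingen (coverJ B) N ->
     forall v : 'I_n, 0 < N v -> forall l, 1 < l ->
       ideal_eq (colon (SF (coverJ B) l) N)
                (SF (colon (coverJ (contract B [set v])) N) (l - 1))).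
Proof.
move=> matB; have clB := matroid_clutter matB; split.
  move=> nJN l _ m; split=> Im.
    exact: (SF_colon_sub_colon_SF matB nJN Im).
  exact: (colon_SF_sub_SF_colon clB Im).
move=> minN v Nv l _ m; have [G GB GN] := mingen_coverJ_basis minN Nv.
have /setIP[vG _] : v \in G :&: msupp N by rewrite GN set11.
have vB : v \in cover B by apply/bigcupP; exists G.
split=> Im.
  exact: (colon_SF_sub_SF_contract1 vB clB Im).
exact: (SF_contract1_sub_colon_SF matB (proj1 minN) GB GN Im).
Qed.
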